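(* Let $\lambda_1,\dots,\lambda_J>0$, $\lambda_{\max}=\max_j\lambda_j$, $\Gamma\ge0$ with $\min_j\lambda_j\Gamma\ge e^{2e}$, and let $(U^j_k)_{k\ge1}$ be nonnegative reals satisfying $\big|\sum_{i=1}^kU^j_i-\lambda_j^{-1}k\big|\le\Gamma\,\phi(k)$ for all $k\ge1$ and all $j$. Let $A_j(t)=\max\{k\ge0:\sum_{i=1}^kU^j_i\le t\}$. Then for every $t$ with $$t\ge\max_j\big(\lambda_j^{-1}e^e,\ \lambda_j^{-1}+3\lambda_j^{-1}\lambda_{\max}^2\Gamma^2\big),$$ we have $A_j(t)\le t\lambda_j+3\lambda_j^2\Gamma^2\phi(t\lambda_j)$ for every $j$.
   Context: $\phi(x)=\sqrt{x\ln\ln x}$ for $x\ge e^e$ and $\phi(x)=1$ for $x<e^e$. *)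

From Stdlib Require Import Reals Lra.
Open Scope R_scope.

Definition phi (x : R) : R :=
  if Rle_dec (exp (exp 1)) x then sqrt (x * ln (ln x)) else 1.

Fixpoint psum (u : nat -> R) (k : nat) : R :=
  match k with
  | O => 0
  | S k' => psum u k' + u k
  end.

(* lam_max lam J = max_{0 <= j < J} lam j  (J >= 1; value 0 for J = 0). *)
Fixpoint lam_max (lam : nat -> R) (J : nat) : R :=
  match J with
  | O => 0
  | S J' => Rmax (lam_max lam J') (lam J')
  end.

(* A u t = max {k >= 0 : psum u k <= t}; we express "A u t <= b" as
   "every k with psum u k <= t satisfies k <= b". *)
Definition A_le (u : nat -> R) (t b : R) : Prop :=
  forall k : nat, psum u k <= t -> INR k <= b.

(* With x = t lam_j and c = lam_j Gamma, the deviation bound turns A_j(t) <= t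
   into the implicit inequality k <= x + c phi(k) for k = A_j(t); it remains to
   solve it, i.e. to show k - x <= 3 c^2 phi(x).  If k <= 2x, then
   phi(k) <= 2 phi(x) and k - x <= 2 c phi(x).  If k > 2x, then k <= 2 c phi(k),
   and lnln k <= 2 k^(1/4) forces k^3 <= 4096 c^8, whereas k >= 3 c^2 sqrt x
   >= 5.1 c^3; the two are incompatible once c >= e^(2e) >= 35. *)

From Stdlib Require Import Reals Lra Psatz Lia.
Open Scope R_scope.

Lemma ln_le a b : 0 < a -> a <= b -> ln a <= ln b.
Proof.
  intros Ha Hab; destruct (Rle_lt_or_eq_dec _ _ Hab) as [Hlt | <-].
  - left; apply ln_increasing; assumption.
  - right; reflexivity.
Qed.

Lemma ln_le_sub1 y : 0 < y -> ln y <= y - 1.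
Proof.
  intros Hy; pose proof (exp_ineq1_le (ln y)) as H; rewrite exp_ln in H; lra.
Qed.

Lemma ln_sqrt y : 0 < y -> ln y = 2 * ln (sqrt y).
Proof.
  intros Hy.
  assert (Hs : 0 < sqrt y) by (apply sqrt_lt_R0; lra).
  rewrite <- (sqrt_sqrt y) at 1 by lra; rewrite ln_mult by lra; ring.
Qed.

Lemma ln_le_half y : 0 < y -> ln y <= y / 2.
Proof.
  intros Hy.
  assert (Hs : 0 < sqrt y) by (apply sqrt_lt_R0; lra).
  pose proof (sqrt_sqrt y (Rlt_le _ _ Hy)).
  pose proof (ln_le_sub1 _ Hs).
  pose proof (pow2_ge_0 (sqrt y - 2)).
  rewrite ln_sqrt by lra; nra.
Qed.

Lemma ln_le_root4 y : 0 < y -> ln y <= 2 * sqrt (sqrt y).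
Proof.
  intros Hy.
  assert (Hs : 0 < sqrt y) by (apply sqrt_lt_R0; lra).
  assert (Hq : 0 < sqrt (sqrt y)) by (apply sqrt_lt_R0; lra).
  pose proof (ln_le_half _ Hq).
  rewrite ln_sqrt, (ln_sqrt (sqrt y)) by lra; lra.
Qed.

Lemma exp_1_ge_2 : 2 <= exp 1.
Proof. pose proof (exp_ineq1_le 1); lra. Qed.

Lemma exp_2e_ge_35 : 35 <= exp (2 * exp 1).
Proof.
  set (z := exp 1 / 8).
  assert (Hz : 5 / 4 <= exp z).
  { pose proof (exp_ineq1_le 1); pose proof (exp_ineq1_le z); unfold z in *; lra. }
  assert (H16 : exp (2 * exp 1) = exp z ^ 16).
  { rewrite <- Rpower_pow by apply exp_pos; unfold Rpower; rewrite ln_exp.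
    f_equal; unfold z; simpl; field. }
  rewrite H16.
  apply Rle_trans with ((5 / 4) ^ 16); [lra | apply pow_incr; lra].
Qed.

Lemma exp_1_le_ln x : exp (exp 1) <= x -> exp 1 <= ln x.
Proof. intros Hx; rewrite <- (ln_exp (exp 1)); apply ln_le; [apply exp_pos | exact Hx]. Qed.

Lemma lnln_ge_1 x : exp (exp 1) <= x -> 1 <= ln (ln x).
Proof.
  intros Hx; rewrite <- (ln_exp 1); apply ln_le; [apply exp_pos | exact (exp_1_le_ln x Hx)].
Qed.

Lemma phi_ge0 x : 0 <= phi x.
Proof. unfold phi; destruct (Rle_dec _ _); [apply sqrt_pos | lra]. Qed.

Lemma phi_sqr x : exp (exp 1) <= x -> phi x * phi x = x * ln (ln x).
Proof.
  intros Hx; unfold phi; destruct (Rle_dec _ _) as [_ | ]; [| contradiction].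
  pose proof (exp_pos (exp 1)); pose proof (lnln_ge_1 x Hx).
  apply sqrt_sqrt; nra.
Qed.

Lemma sqrt_le_phi x : exp (exp 1) <= x -> sqrt x <= phi x.
Proof.
  intros Hx; pose proof (exp_pos (exp 1)); pose proof (lnln_ge_1 x Hx).
  apply Rsqr_incr_0_var; [| apply phi_ge0].
  rewrite !Rsqr_def, sqrt_sqrt, phi_sqr by lra; nra.
Qed.

Lemma phi_le_double x k : exp (exp 1) <= x -> x <= k -> k <= 2 * x ->
  phi k <= 2 * phi x.
Proof.
  intros Hx Hxk Hk2.
  pose proof (exp_pos (exp 1)); pose proof exp_1_ge_2.
  pose proof (exp_1_le_ln x Hx); pose proof (exp_1_le_ln k (Rle_trans _ _ _ Hx Hxk)).
  pose proof (lnln_ge_1 x Hx); pose proof (lnln_ge_1 k (Rle_trans _ _ _ Hx Hxk)).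
  assert (Hx3 : 3 <= x) by (pose proof (exp_ineq1_le (exp 1)); lra).
  assert (Hln : ln k <= 2 * ln x).
  { rewrite <- Rplus_diag, <- ln_mult by lra; apply ln_le; nra. }
  assert (Hlnln : ln (ln k) <= 2 * ln (ln x)).
  { rewrite <- (Rplus_diag (ln (ln x))), <- ln_mult by lra; apply ln_le; nra. }
  apply Rsqr_incr_0_var; [| pose proof (phi_ge0 x); lra].
  rewrite !Rsqr_def.
  replace (2 * phi x * (2 * phi x)) with (4 * (phi x * phi x)) by ring.
  rewrite !phi_sqr by lra.
  apply Rle_trans with ((2 * x) * (2 * ln (ln x))); [apply Rmult_le_compat | ]; nra.
Qed.

Lemma le_mul_phi_bound a k : exp (exp 1) <= k -> k <= a * phi k -> k ^ 3 <= 16 * a ^ 8.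
Proof.
  intros Hk Hka.
  pose proof (exp_pos (exp 1)); pose proof (exp_1_le_ln k Hk); pose proof exp_1_ge_2.
  pose proof (lnln_ge_1 k Hk); pose proof (phi_sqr k Hk); pose proof (phi_ge0 k).
  assert (HkL : k <= a ^ 2 * ln (ln k)).
  { assert (k * k <= (a * phi k) * (a * phi k)) by (apply Rmult_le_compat; lra). nra. }
  assert (HLk : ln (ln k) <= ln k) by (pose proof (ln_le_sub1 (ln k)); lra).
  pose proof (ln_le_root4 k ltac:(lra)).
  pose proof (sqrt_sqrt k ltac:(lra)) as Hs.
  pose proof (sqrt_sqrt (sqrt k) (sqrt_pos k)) as Hq2.
  assert (Hq : 0 < sqrt (sqrt k)) by (apply sqrt_lt_R0, sqrt_lt_R0; lra).
  set (q := sqrt (sqrt k)) in *.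
  assert (Hq4 : k = q ^ 4) by (rewrite <- Hs, <- Hq2; ring).
  assert (Hq3 : q ^ 3 <= 2 * a ^ 2).
  { assert (q * q ^ 3 <= q * (2 * a ^ 2)).
    { replace (q * q ^ 3) with k by (rewrite Hq4; ring); nra. }
    nra. }
  replace (k ^ 3) with ((q ^ 3) ^ 4) by (rewrite Hq4; ring).
  replace (16 * a ^ 8) with ((2 * a ^ 2) ^ 4) by ring.
  apply pow_incr; split; [apply pow_le; lra | exact Hq3].
Qed.

Lemma le_add_mul_phi_self x c k : exp (exp 1) <= x -> 3 * c ^ 2 <= x -> 35 <= c ->
  k <= x + c * phi k -> k <= x + 3 * c ^ 2 * phi x.
Proof.
  intros Hx Hxc Hc Hk.
  apply Rnot_lt_le; intros Hlt.
  pose proof (phi_ge0 x); pose proof (phi_ge0 k); pose proof (exp_pos (exp 1)).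
  assert (0 <= c ^ 2 * phi x) by (apply Rmult_le_pos; [apply pow2_ge_0 | lra]).
  assert (Hxk : x <= k) by lra.
  destruct (Rle_or_lt k (2 * x)) as [Hk2 | Hk2].
  - pose proof (phi_le_double x k Hx Hxk Hk2).
    assert (c * phi k <= c * (2 * phi x)) by (apply Rmult_le_compat_l; lra).
    nra.
  - assert (Hke : exp (exp 1) <= k) by lra.
    pose proof (le_mul_phi_bound (2 * c) k Hke ltac:(lra)) as Hbound.
    pose proof (sqrt_le_phi x Hx).
    pose proof (sqrt_sqrt x ltac:(lra)); pose proof (sqrt_pos x).
    assert (Hsx : 17 / 10 * c <= sqrt x) by nra.
    assert (Hk3 : 51 / 10 * c ^ 3 <= k) by nra.
    assert ((51 / 10 * c ^ 3) ^ 3 <= k ^ 3) by (apply pow_incr; nra).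
    assert (0 < c ^ 8) by (apply pow_lt; lra).
    nra.
Qed.

Lemma le_lam_max lam J j : (j < J)%nat -> lam j <= lam_max lam J.
Proof.
  induction J as [| J IH]; intros Hj; [lia |]; simpl.
  destruct (Nat.eq_dec j J) as [-> | Hne].
  - apply Rmax_r.
  - apply Rle_trans with (lam_max lam J); [apply IH; lia | apply Rmax_l].
Qed.

Lemma count_le_of_psum_le (u : nat -> R) (l Gamma t : R) (k : nat) :
  0 < l -> 0 <= Gamma -> 0 <= t ->
  (forall k, (1 <= k)%nat -> Rabs (psum u k - / l * INR k) <= Gamma * phi (INR k)) ->
  psum u k <= t -> INR k <= t * l + l * Gamma * phi (INR k).
Proof.
  intros Hl HGamma Ht Hdev Hk.
  destruct k as [| k].
  - simpl; assert (0 <= l * Gamma * phi 0) by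
      (apply Rmult_le_pos; [apply Rmult_le_pos; lra | apply phi_ge0]).
    nra.
  - pose proof (Rle_abs (- (psum u (S k) - / l * INR (S k)))) as Habs.
    rewrite Rabs_Ropp in Habs.
    pose proof (Hdev (S k) ltac:(lia)).
    assert (Hdiv : / l * INR (S k) <= t + Gamma * phi (INR (S k))) by lra.
    apply Rmult_le_compat_l with (r := l) in Hdiv; [| lra].
    rewrite <- Rmult_assoc, Rinv_r, Rmult_1_l in Hdiv by lra.
    lra.
Qed.

Theorem mainTheorem7
  (J : nat) (lam : nat -> R) (Gamma : R) (U : nat -> nat -> R)
  (hJ : (1 <= J)%nat)
  (hlam : forall j, (j < J)%nat -> 0 < lam j)
  (hGamma : 0 <= Gamma)
  (hmin : forall j, (j < J)%nat -> exp (2 * exp 1) <= lam j * Gamma)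
  (hU : forall j i, (j < J)%nat -> (1 <= i)%nat -> 0 <= U j i)
  (hsum : forall j k, (j < J)%nat -> (1 <= k)%nat ->
            Rabs (psum (U j) k - / lam j * INR k) <= Gamma * phi (INR k))
  (t : R)
  (ht : forall j, (j < J)%nat ->
          / lam j * exp (exp 1) <= t /\
          / lam j + 3 * / lam j * (lam_max lam J) ^ 2 * Gamma ^ 2 <= t) :
  forall j, (j < J)%nat ->
    A_le (U j) t (t * lam j + 3 * lam j ^ 2 * Gamma ^ 2 * phi (t * lam j)).
Proof.
  intros j Hj k Hk.
  pose proof (hlam j Hj) as Hl.
  destruct (ht j Hj) as [Ht_ee Ht_Gamma].
  pose proof (le_lam_max lam J j Hj) as Hmax.
  pose proof (exp_pos (exp 1)).
  assert (Hx : exp (exp 1) <= t * lam j).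
  { apply Rmult_le_compat_r with (r := lam j) in Ht_ee; [| lra].
    rewrite Rmult_comm, <- Rmult_assoc, Rinv_r, Rmult_1_l in Ht_ee by lra; exact Ht_ee. }
  assert (Hxc : 3 * (lam j * Gamma) ^ 2 <= t * lam j).
  { apply Rmult_le_compat_r with (r := lam j) in Ht_Gamma; [| lra].
    replace ((/ lam j + 3 * / lam j * lam_max lam J ^ 2 * Gamma ^ 2) * lam j)
      with (1 + 3 * lam_max lam J ^ 2 * Gamma ^ 2) in Ht_Gamma by (field; lra).
    assert (lam j ^ 2 <= lam_max lam J ^ 2) by (apply pow_incr; lra).
    assert (lam j ^ 2 * Gamma ^ 2 <= lam_max lam J ^ 2 * Gamma ^ 2)
      by (apply Rmult_le_compat_r; [apply pow2_ge_0 | lra]).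
    rewrite Rpow_mult_distr; lra. }
  replace (3 * lam j ^ 2 * Gamma ^ 2) with (3 * (lam j * Gamma) ^ 2) by ring.
  apply le_add_mul_phi_self; [exact Hx | exact Hxc | pose proof exp_2e_ge_35; pose proof (hmin j Hj); lra |].
  apply (count_le_of_psum_le (U j)); [lra | lra | nra | intros i Hi; apply hsum; lia | exact Hk].
Qed.
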